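(* Let $n\in\mathbb N$ and let $W,W',M,M'$ be pairwise disjoint sets, each of cardinality $n$. There exist functions $\succ_{W\cup W'}:\mathcal P(W,M)\to\mathcal F(W\cup W',M\cup M')$ and $\succ_{M\cup M'}:\mathcal P(M,W)\to\mathcal F(M\cup M',W\cup W')$ such that for every $\succ_W\in\mathcal P(W,M)$, $\succ_M\in\mathcal P(M,W)$ and every (possibly imperfect) marriage $\mu$ between $W$ and $M$, the following are equivalent: (1) $\mu$ is stable with respect to $\succ_W$ and $\succ_M$; (2) $\mu$ is a submarriage of some marriage between $W\cup W'$ and $M\cup M'$ that is stable with respect to $\succ_{W\cup W'}(\succ_W)$ and $\succ_{M\cup M'}(\succ_M)$.
   Context: $\mathcal P(A,B)$ is the set of profiles assigning to each $a\in A$ a preference list, i.e. a totally ordered subset of $B$ (members of $B$ not on the list are unacceptable); $\mathcal F(A,B)\subseteq\mathcal P(A,B)$ consists of profiles in which every list contains all of $B$. A participant prefers $x$ over $x'$ if $x$ precedes $x'$ on their list, or $x$ is on the list and $x'$ is not (being single counts as being matched to someone off the list). A marriage is a one-to-one map between a subset of the women and a subset of the men. It is stable if every married participant is married to someone on their list and there is no blocking pair $(w,m)$ where $w$ prefers $m$ to her current situation and $m$ prefers $w$ to his. A marriage $\mu$ between subsets of $W\subseteq \widetilde W$ and $M\subseteq\widetilde M$ is a submarriage of a marriage $\mu'$ between $\widetilde W$ and $\widetilde M$ if for all $w\in W$, $m\in M$: $\mu'(w)=m$ iff $\mu(w)=m$. *)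

From mathcomp Require Import all_boot.
Set Implicit Arguments. Unset Strict Implicit. Unset Printing Implicit Defensive.

(* A preference list of a participant is a duplicate-free sequence (a totally
   ordered subset of the other side); a profile assigns one to each member. *)
Definition profile (A B : finType) (p : A -> seq B) : Prop :=
  forall a, uniq (p a).

Definition full_profile (A B : finType) (p : A -> seq B) : Prop :=
  forall a, uniq (p a) /\ (forall b, b \in p a).

(* "l prefers x over its current situation cur" (cur = None means single,
   which counts like being matched to someone off the list): x precedes y on
   l, or x is on l and y is not. *)
Definition prefers (B : eqType) (l : seq B) (x : B) (cur : option B) : bool :=
  (x \in l) &&
  (match cur with None => true | Some y => (y \notin l) || (index x l < index y l) end).

Definition marriage (A B : finType) (mu : A -> option B) : Prop :=
  forall a1 a2 b, mu a1 = Some b -> mu a2 = Some b -> a1 = a2.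

Definition husband_of (A B : finType) (mu : A -> option B) (b : B) : option A :=
  [pick a | mu a == Some b].

Definition stable (A B : finType) (pA : A -> seq B) (pB : B -> seq A)
  (mu : A -> option B) : Prop :=
  (forall a b, mu a = Some b -> b \in pA a /\ a \in pB b) /\
  (forall a b, ~ (prefers (pA a) b (mu a) && prefers (pB b) a (husband_of mu b))).

Definition submarriage (W W' M M' : finType) (mu : W -> option M)
  (mu' : (W + W')%type -> option (M + M')%type) : Prop :=
  forall (w : W) (m : M), mu' (inl w) = Some (inl m) <-> mu w = Some m.

From mathcomp Require Import all_boot.
Set Implicit Arguments. Unset Strict Implicit. Unset Printing Implicit Defensive.

(* Pair each real woman w with a dummy man f w and each real man m with a dummy
   woman g m.  A real participant's new list is her old list, then her own
   dummy, then everybody else; a dummy's list starts with its own real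
   participant, followed by all dummies of the other side in a fixed order.
   If mu' is stable for the new lists, a real participant who is single or
   holds an unacceptable partner in its restriction would block with its own
   dummy, which ranks it first; real pairs block mu' whenever they block the
   restriction.  Conversely a stable mu extends: singles marry their own
   dummies and the remaining dummies (those of married participants, equally
   many on both sides) are paired rank by rank in the fixed orders, which no
   two dummies can block; dummies never block with real participants, who
   rank all foreign dummies below their current situation. *)

Lemma eq_card_cancel (A B : finType) : #|A| = #|B| ->
  exists (f : A -> B) (f' : B -> A), cancel f f' /\ cancel f' f.
Proof.
pose tr (X Y : finType) (e : #|X| = #|Y|) (x : X) : Y :=
  enum_val (cast_ord e (enum_rank x)).
have trK (X Y : finType) (e : #|X| = #|Y|) (e' : #|Y| = #|X|) :
    cancel (tr X Y e) (tr Y X e').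
  move=> x; rewrite /tr enum_valK.
  by rewrite (_ : cast_ord _ _ = enum_rank x) ?enum_rankK //; apply: val_inj.
by move=> eAB; exists (tr _ _ eAB), (tr _ _ (esym eAB)); split; apply: trK.
Qed.

Lemma size_filter_cancel (X X' : finType) (h : X' -> X) (h' : X -> X')
    (P : pred X) :
  cancel h h' -> cancel h' h -> size [seq x' <- enum X' | P (h x')] = #|P|.
Proof.
move=> hK h'K; rewrite cardE -(size_map h); apply/perm_size/uniq_perm.
- by rewrite (map_inj_uniq (can_inj hK)) filter_uniq ?enum_uniq.
- exact: enum_uniq.
move=> x; rewrite mem_enum.
apply/mapP/idP => [[x'] /[!mem_filter] /andP[Px _] -> //|Px].
by exists (h' x); rewrite ?h'K // mem_filter h'K mem_enum andbT.
Qed.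

Lemma index_filter_mono (T : eqType) (p : pred T) (s : seq T) x y :
  x \in filter p s -> y \in filter p s -> index x s < index y s ->
  index x (filter p s) < index y (filter p s).
Proof.
elim: s => [//|b s IH] /=.
have [<-|yb] := eqVneq y b; first by rewrite ltn0.
have [->|xb] := eqVneq x b.
  case: ifP => pb /=; last by rewrite mem_filter pb.
  by rewrite eqxx eq_sym (negbTE yb).
rewrite ltnS; case: ifP => _ /=; last exact: IH.
rewrite !in_cons !(eq_sym b) (negbTE xb) (negbTE yb) /= ltnS; exact: IH.
Qed.

Section RankMatch.
Variables (X Y : eqType) (s : seq X) (t : seq Y).

Definition rank_match (x : X) : option Y := onth t (index x s).

Hypotheses (t_uniq : uniq t) (size_st : size s = size t).

Lemma rank_match_None x : (rank_match x == None) = (x \notin s).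
Proof. by rewrite -index_mem size_st -leqNgt -onthNE /rank_match; case: onth. Qed.

Lemma rank_matchP x y :
  rank_match x = Some y <-> [/\ x \in s, y \in t & index x s = index y t].
Proof.
split=> [e|[xs yt e]]; last first.
  by rewrite /rank_match e onthE (nth_map y) ?index_mem ?nth_index.
have lt : index x s < size t by rewrite -onthTE /rank_match in e *; rewrite e.
have <- := @onth_nth _ y y t _ e.
by rewrite mem_nth ?index_uniq // -index_mem size_st.
Qed.

End RankMatch.

Lemma rank_match_sym (X Y : eqType) (s : seq X) (t : seq Y) x y :
  uniq s -> uniq t -> size s = size t ->
  rank_match s t x = Some y <-> rank_match t s y = Some x.
Proof.
move=> s_uniq t_uniq size_st.
have size_ts := esym size_st.
split=> [/(rank_matchP t_uniq size_st)|/(rank_matchP s_uniq size_ts)] [xs yt e].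
  exact/(rank_matchP s_uniq size_ts).
exact/(rank_matchP t_uniq size_st).
Qed.

Lemma rank_match_nonblocking (X Y : eqType) (s : seq X) (t : seq Y)
    (p : pred X) (q : pred Y) x y x1 y1 :
  uniq s -> uniq t -> size (filter p s) = size (filter q t) ->
  rank_match (filter p s) (filter q t) x = Some y1 ->
  rank_match (filter q t) (filter p s) y = Some x1 ->
  index x s < index x1 s -> index y t < index y1 t -> False.
Proof.
move=> s_uniq t_uniq size_st.
have [ps qt] := (filter_uniq p s_uniq, filter_uniq q t_uniq).
move=> /(rank_matchP qt size_st) [xs y1t ex].
move=> /(rank_matchP ps (esym size_st))[yt x1s ey] ltx lty.
have := index_filter_mono xs x1s ltx; have := index_filter_mono yt y1t lty.
by rewrite ex ey => lt1 /(ltn_trans lt1); rewrite ltnn.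
Qed.

Section Completion.
Variable T : finType.

Definition complete (p : seq T) : seq T := p ++ [seq x <- enum T | x \notin p].

Lemma complete_full p : uniq p -> uniq (complete p) /\ forall x, x \in complete p.
Proof.
move=> p_uniq; split.
  rewrite cat_uniq p_uniq filter_uniq ?enum_uniq // andbT /=.
  by apply/hasPn => x; rewrite mem_filter => /andP[].
by move=> x; rewrite mem_cat mem_filter mem_enum andbT orbN.
Qed.

Lemma index_complete p x : x \in p -> index x (complete p) = index x p.
Proof. by move=> xp; rewrite index_cat xp. Qed.

Lemma index_complete_notin p x : x \notin p -> size p <= index x (complete p).
Proof. by move=> /negbTE xp; rewrite index_cat xp leq_addr. Qed.

End Completion.

Lemma prefers_total (B : eqType) (l : seq B) x y :
  (forall z, z \in l) -> prefers l x (Some y) = (index x l < index y l).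
Proof. by move=> l_full; rewrite /prefers !l_full. Qed.

Definition real_list (X Y : finType) (l : seq X) (d : Y) : seq (X + Y) :=
  complete (map inl l ++ [:: inr d]).

Section RealList.
Variables (X Y : finType) (l : seq X) (d : Y).
Hypothesis l_uniq : uniq l.
Local Notation L := (real_list l d).

Lemma real_list_full : uniq L /\ forall z, z \in L.
Proof.
apply: complete_full.
rewrite cat_uniq (map_inj_uniq inl_inj) l_uniq /= orbF andbT.
by apply/mapP => -[].
Qed.

Let prefers_L u v : prefers L u (Some v) = (index u L < index v L).
Proof. exact: prefers_total real_list_full.2. Qed.

Lemma index_real_list_inl y : y \in l -> index (inl y) L = index y l.
Proof.
move=> yl; rewrite index_complete ?mem_cat ?map_f //.
by rewrite index_cat map_f // (index_map inl_inj).
Qed.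

Lemma index_real_list_own : index (inr d) L = size l.
Proof.
rewrite index_complete ?mem_cat ?mem_seq1 ?eqxx ?orbT // index_cat.
by case: mapP => [[]//|_]; rewrite size_map /= eqxx addn0.
Qed.

Lemma index_real_list_inr z : size l <= index (inr z) L.
Proof.
have [->|zd] := eqVneq z d; first by rewrite index_real_list_own.
apply: leq_trans (index_complete_notin _).
  by rewrite size_cat size_map leq_addr.
rewrite mem_cat mem_seq1 negb_or; apply/andP; split; first by apply/mapP => -[].
by apply: contra_neq zd => -[].
Qed.

Lemma index_real_list_notin y : y \notin l -> size l < index (inl y) L.
Proof.
move=> yl; apply: leq_trans (index_complete_notin _).
  by rewrite size_cat size_map addn1.
by rewrite mem_cat mem_seq1 orbF (mem_map inl_inj).
Qed.

Lemma index_real_list_inl_lt y k :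
  k <= size l -> (index (inl y) L < k) = (y \in l) && (index y l < k).
Proof.
move=> k_le; have [yl|yl] := boolP (y \in l).
  by rewrite index_real_list_inl.
by rewrite ltnNge ltnW // (leq_ltn_trans k_le) ?index_real_list_notin.
Qed.

Lemma prefers_real_list_lift x c : (forall y, c = Some y -> y \in l) ->
  prefers L (inl x) (Some (if c is Some y then inl y else inr d)) = prefers l x c.
Proof.
rewrite prefers_L /prefers; case: c => [y /(_ y erefl) yl|_].
  rewrite yl (index_real_list_inl yl) index_real_list_inl_lt //.
  by rewrite ltnW ?index_mem.
by rewrite index_real_list_own index_real_list_inl_lt // index_mem andbb andbT.
Qed.

Lemma prefers_real_list_sub x c c' :
  (forall y, c' = Some (inl y) <-> c = Some y) ->
  prefers l x c -> prefers L (inl x) c'.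
Proof.
case: c' => [[y|z]|] cc' pref; last by rewrite /prefers real_list_full.2.
  move: pref; rewrite ((cc' y).1 erefl) prefers_L /prefers => /andP[xl].
  have [yl /= lt|yl _] := boolP (y \in l); first by rewrite !index_real_list_inl.
  rewrite index_real_list_inl //; apply: ltn_trans (index_real_list_notin yl).
  by rewrite index_mem.
case: c cc' pref => [y /(_ y) [_ /(_ erefl)] //|_].
rewrite prefers_L /prefers andbT => xl; rewrite index_real_list_inl //.
by apply: leq_trans (index_real_list_inr z); rewrite index_mem.
Qed.

Lemma real_list_nprefers_inr z c : (forall y, c = Some y -> y \in l) ->
  ~~ prefers L (inr z) (Some (if c is Some y then inl y else inr d)).
Proof.
rewrite prefers_L -leqNgt; case: c => [y /(_ y erefl) yl|_].
  rewrite index_real_list_inl // ltnW //.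
  by rewrite (leq_trans _ (index_real_list_inr z)) ?index_mem.
by rewrite index_real_list_own index_real_list_inr.
Qed.

Lemma real_list_prefers_own y : y \notin l -> prefers L (inr d) (Some (inl y)).
Proof.
by move=> yl; rewrite prefers_L index_real_list_own index_real_list_notin.
Qed.

End RealList.

Definition dummy_list (X Y : finType) (x : X) : seq (X + Y) :=
  complete (inl x :: map inr (enum Y)).

Section DummyList.
Variables (X Y : finType) (x : X).
Local Notation L := (dummy_list Y x).

Lemma dummy_list_full : uniq L /\ forall z, z \in L.
Proof.
apply: complete_full; rewrite /= (map_inj_uniq inr_inj) enum_uniq andbT.
by apply/mapP => -[].
Qed.

Let prefers_L u v : prefers L u (Some v) = (index u L < index v L).
Proof. exact: prefers_total dummy_list_full.2. Qed.

Lemma dummy_list_nprefers_head u : ~~ prefers L u (Some (inl x)).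
Proof. by rewrite prefers_L /dummy_list /complete /= eqxx ltn0. Qed.

Lemma prefers_dummy_list_head c : prefers L (inl x) c = (c != Some (inl x)).
Proof.
case: c => [v|]; last by rewrite /prefers dummy_list_full.2.
rewrite prefers_L /dummy_list /complete /= eqxx.
by case: eqVneq => [<-|ne]; rewrite ?eqxx // eq_sym (inj_eq Some_inj) ne.
Qed.

Lemma prefers_dummy_list_inr y1 y2 :
  prefers L (inr y1) (Some (inr y2)) = (index y1 (enum Y) < index y2 (enum Y)).
Proof.
have idx y : index (inr y) L = (index y (enum Y)).+1.
  rewrite index_complete /=; last by rewrite in_cons map_f ?mem_enum ?orbT.
  by rewrite (index_map inr_inj).
by rewrite prefers_L !idx.
Qed.

End DummyList.

Definition ext_profile (A A' B B' : finType) (f : A -> B') (g' : A' -> B)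
    (p : A -> seq B) (a : A + A') : seq (B + B') :=
  match a with
  | inl a => real_list (p a) (f a)
  | inr a' => dummy_list B' (g' a')
  end.

Lemma ext_profile_full (A A' B B' : finType) (f : A -> B') (g' : A' -> B)
    (p : A -> seq B) :
  profile p -> full_profile (ext_profile f g' p).
Proof.
by move=> p_uniq [a|a'] /=; [apply: real_list_full | apply: dummy_list_full].
Qed.

Lemma husband_ofP (A B : finType) (mu : A -> option B) :
  marriage mu -> forall a b, husband_of mu b = Some a <-> mu a = Some b.
Proof.
move=> mu_inj a b; rewrite /husband_of; split.
  by case: pickP => [a' /eqP e [<-]|].
move=> e; case: pickP => [a' /eqP e'|/(_ a)]; last by rewrite e eqxx.
by rewrite (mu_inj _ _ _ e' e).
Qed.

Lemma card_matched (A B : finType) (mu : A -> option B) (nu : B -> option A) :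
  (forall a b, mu a = Some b <-> nu b = Some a) ->
  #|[pred a | mu a != None]| = #|[pred b | nu b != None]|.
Proof.
move=> mu_nu.
have inj : {in [pred a | mu a != None] &, injective mu}.
  move=> a1 a2 /[!inE]; case e: (mu a1) => [b|] // _ _ e2.
  by move/mu_nu: e; move/esym/mu_nu: e2 => -> [].
rewrite -(card_in_imset inj) -[RHS](card_imset _ Some_inj).
apply: eq_card => o; apply/imsetP/imsetP => -[x] /[!inE].
  case e: (mu x) => [b|] // _ ->.
  by exists b; rewrite // inE; move/mu_nu: e ->.
case e: (nu x) => [a|] // _ ->.
by move/mu_nu: e => e; exists a; rewrite ?inE e.
Qed.

Definition matched_dummies (X X' Y : finType) (h : X' -> X)
    (nu : X -> option Y) : seq X' :=
  [seq x' <- enum X' | nu (h x') != None].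

Definition embed (A A' B B' : finType) (f : A -> B') (f' : B' -> A)
    (g' : A' -> B) (mu : A -> option B) (nu : B -> option A) (a : A + A') :
    B + B' :=
  match a with
  | inl a => if mu a is Some b then inl b else inr (f a)
  | inr a' =>
      if rank_match (matched_dummies g' nu) (matched_dummies f' mu) a'
        is Some b' then inr b' else inl (g' a')
  end.

Section Embed.
Variables (A A' B B' : finType).
Variables (f : A -> B') (f' : B' -> A) (g : B -> A') (g' : A' -> B).
Hypotheses (fK : cancel f f') (f'K : cancel f' f).
Hypotheses (gK : cancel g g') (g'K : cancel g' g).
Variables (mu : A -> option B) (nu : B -> option A).
Hypothesis mu_nu : forall a b, mu a = Some b <-> nu b = Some a.

Lemma size_matched_dummies :
  size (matched_dummies g' nu) = size (matched_dummies f' mu).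
Proof.
rewrite /matched_dummies (size_filter_cancel (fun b => nu b != None) g'K gK).
rewrite (size_filter_cancel (fun a => mu a != None) f'K fK).
exact/esym/card_matched.
Qed.

Lemma embedK : cancel (embed f f' g' mu nu) (embed g g' f' nu mu).
Proof.
have size_dummies := size_matched_dummies.
have uniq_dummies (X X' Y : finType) (h : X' -> X) (nu' : X -> option Y) :
  uniq (matched_dummies h nu') by rewrite filter_uniq ?enum_uniq.
case=> [a|a'] /=.
  case e: (mu a) => [b|] /=; first by move/mu_nu: e ->.
  have /eqP -> :
      rank_match (matched_dummies f' mu) (matched_dummies g' nu) (f a) == None.
    by rewrite rank_match_None // mem_filter fK e.
  by rewrite fK.
case e: rank_match => [b'|] /=.
  by move/rank_match_sym: e => ->.
move/eqP: e; rewrite rank_match_None // mem_filter mem_enum andbT negbK.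
by move=> /eqP ->; rewrite g'K.
Qed.

End Embed.

Section DummyExtension.
Variables (W W' M M' : finType).
Variables (f : W -> M') (f' : M' -> W) (g : M -> W') (g' : W' -> M).
Hypotheses (fK : cancel f f') (f'K : cancel f' f).
Hypotheses (gK : cancel g g') (g'K : cancel g' g).

Local Notation extW := (ext_profile f g').
Local Notation extM := (ext_profile g f').

Lemma stable_restrict (pW : W -> seq M) (pM : M -> seq W) (mu : W -> option M)
    (mu' : W + W' -> option (M + M')) :
  profile pW -> profile pM -> marriage mu -> marriage mu' ->
  stable (extW pW) (extM pM) mu' -> submarriage mu mu' -> stable pW pM mu.
Proof.
move=> pW_uniq pM_uniq mu_inj mu'_inj [_ no_block] sub.
have husband_sub m w :
    husband_of mu' (inl m) = Some (inl w) <-> husband_of mu m = Some w.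
  split=> [/(husband_ofP mu'_inj)/sub/(husband_ofP mu_inj)//|].
  by move=> /(husband_ofP mu_inj)/sub/(husband_ofP mu'_inj).
split=> [w m e|w m /andP[pw pm]].
  have e' : mu' (inl w) = Some (inl m) by apply/sub.
  split; apply/negPn/negP => off.
    apply: (no_block (inl w) (inr (f w))); rewrite /= e' fK.
    rewrite real_list_prefers_own // prefers_dummy_list_head.
    by apply/eqP => /(husband_ofP mu'_inj); rewrite e'.
  apply: (no_block (inr (g m)) (inl m)); rewrite /= gK prefers_dummy_list_head.
  rewrite (proj2 (husband_ofP mu'_inj (inl w) (inl m)) e').
  rewrite real_list_prefers_own // andbT.
  by apply/eqP => /(mu'_inj _ _ _ e').
apply: (no_block (inl w) (inl m)); apply/andP; split.
  exact: (prefers_real_list_sub _ (pW_uniq w) (sub w) pw).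
exact: (prefers_real_list_sub _ (pM_uniq m) (husband_sub m) pm).
Qed.

Section Embedding.
Variables (pW : W -> seq M) (pM : M -> seq W) (mu : W -> option M).
Hypotheses (pW_uniq : profile pW) (pM_uniq : profile pM) (mu_inj : marriage mu).

Local Notation emb := (embed f f' g' mu (husband_of mu)).
Local Notation emb' := (embed g g' f' (husband_of mu) mu).

Let mu_husband w m : mu w = Some m <-> husband_of mu m = Some w :=
  iff_sym (husband_ofP mu_inj w m).

Let embK : cancel emb emb' := embedK fK f'K gK g'K mu_husband.
Let emb'K : cancel emb' emb :=
  embedK gK g'K fK f'K (fun m w => husband_ofP mu_inj w m).

Lemma marriage_embed : marriage (fun a => Some (emb a)).
Proof. by move=> a1 a2 b [<-] [/(can_inj embK)]. Qed.

Lemma husband_of_embed b : husband_of (fun a => Some (emb a)) b = Some (emb' b).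
Proof. by apply/(husband_ofP marriage_embed); rewrite emb'K. Qed.

Lemma submarriage_embed : submarriage mu (fun a => Some (emb a)).
Proof. by move=> w m /=; case: (mu w) => [m'|]; split=> // -[->]. Qed.

Lemma stable_embed :
  stable pW pM mu -> stable (extW pW) (extM pM) (fun a => Some (emb a)).
Proof.
move=> [acceptable no_block].
have accW w m : mu w = Some m -> m \in pW w.
  by move=> /acceptable[].
have accM m w : husband_of mu m = Some w -> w \in pM m.
  by move=> /(husband_ofP mu_inj)/acceptable[].
split=> [a b _|a b].
  by split; [apply: (ext_profile_full f g' pW_uniq a).2
             | apply: (ext_profile_full g f' pM_uniq b).2].
rewrite husband_of_embed; case: a b => [w|w'] [m|m'] /=.
- rewrite (prefers_real_list_lift _ (pW_uniq w) _ (accW w)).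
  by rewrite (prefers_real_list_lift _ (pM_uniq m) _ (accM m)); apply: no_block.
- by rewrite (negbTE (real_list_nprefers_inr _ (pW_uniq w) _ (accW w))).
- by rewrite (negbTE (real_list_nprefers_inr _ (pM_uniq m) _ (accM m))) andbF.
case e1: rank_match => [m1|]; last first.
  by rewrite (negbTE (dummy_list_nprefers_head _ _)).
case e2: rank_match => [w1|]; last first.
  by rewrite (negbTE (dummy_list_nprefers_head _ _)) andbF.
rewrite !prefers_dummy_list_inr => /andP[lt_m lt_w].
apply: rank_match_nonblocking e1 e2 lt_w lt_m; rewrite ?enum_uniq //.
by have := size_matched_dummies fK f'K gK g'K mu_husband.
Qed.

End Embedding.

End DummyExtension.

Theorem lemma20 (n : nat) (W W' M M' : finType)
  (hW : #|W| = n) (hW' : #|W'| = n) (hM : #|M| = n) (hM' : #|M'| = n) :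
  exists (extW : (W -> seq M) -> (W + W')%type -> seq (M + M')%type)
         (extM : (M -> seq W) -> (M + M')%type -> seq (W + W')%type),
    (forall pW : W -> seq M, profile pW -> full_profile (extW pW)) /\
    (forall pM : M -> seq W, profile pM -> full_profile (extM pM)) /\
    (forall (pW : W -> seq M) (pM : M -> seq W) (mu : W -> option M),
       profile pW -> profile pM -> marriage mu ->
       (stable pW pM mu <->
        exists mu' : (W + W')%type -> option (M + M')%type,
          marriage mu' /\ stable (extW pW) (extM pM) mu' /\ submarriage mu mu')).
Proof.
have [f [f' [fK f'K]]] := eq_card_cancel (etrans hW (esym hM')).
have [g [g' [gK g'K]]] := eq_card_cancel (etrans hM (esym hW')).
exists (ext_profile f g'), (ext_profile g f').
split; first by move=> pW; apply: ext_profile_full.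
split; first by move=> pM; apply: ext_profile_full.
move=> pW pM mu pW_uniq pM_uniq mu_inj.
split=> [mu_stable|[mu' [mu'_inj [mu'_stable sub]]]].
  exists (fun a => Some (embed f f' g' mu (husband_of mu) a)).
  split; first exact: marriage_embed.
  by split; [apply: stable_embed | apply: submarriage_embed].
exact: stable_restrict mu'_stable sub.
Qed.
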